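(* Let $Y$ and $W$ be nonempty finite posets and let $n\ge 2$. There is a bijection between \[ O_{\mu(Y,W),n}\ \sqcup\ \bigsqcup_{\substack{a+b=n-1\\ a,b\ge 1}} O_{Y,a}\times O_{W,b} \qquad\text{and}\qquad \bigsqcup_{\substack{c+d=n\\ c,d\ge 1}} O_{Y,c}\times O_{W,d}. \] In particular $\Omega(\mu(Y,W),n)+\sum_{a+b=n-1}\Omega(Y,a)\Omega(W,b)=\sum_{c+d=n}\Omega(Y,c)\Omega(W,d)$.
   Context: For $n\ge1$, $\langle n\rangle$ denotes the chain $1<2<\dots<n$. For a finite poset $X$, $O_{X,n}$ is the set of strict order preserving maps $f:X\to\langle n\rangle$ (i.e. $u<v$ in $X$ implies $f(u)<f(v)$), and $\Omega(X,n)=|O_{X,n}|$. For finite posets $Y,W$, the concatenation $\mu(Y,W)$ is the poset on the disjoint union of $Y$ and $W$, keeping the orders of $Y$ and $W$, and additionally declaring every element of $Y$ smaller than every element of $W$. *)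

From mathcomp Require Import all_boot all_order.
Set Implicit Arguments. Unset Strict Implicit. Unset Printing Implicit Defensive.

Definition is_poset (X : finType) (le : rel X) : Prop :=
  reflexive le /\ antisymmetric le /\ transitive le.

Definition slt (X : finType) (le : rel X) : rel X := fun u v => le u v && (u != v).

(* The chain <n> = 1 < 2 < ... < n is represented by 'I_n (values 0..n-1),
   with the usual order; this is an order isomorphism. *)
Definition strict_pres (X : finType) (le : rel X) (n : nat) (f : {ffun X -> 'I_n}) : bool :=
  [forall u, forall v, slt le u v ==> (f u < f v)].

Definition O (X : finType) (le : rel X) (n : nat) : Type :=
  {f : {ffun X -> 'I_n} | strict_pres le f}.

Definition Omega (X : finType) (le : rel X) (n : nat) : nat :=
  #|[set f : {ffun X -> 'I_n} | strict_pres le f]|.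

Definition mu (Y W : finType) (leY : rel Y) (leW : rel W) : rel (Y + W)%type :=
  fun x y => match x, y with
             | inl a, inl b => leY a b
             | inr a, inr b => leW a b
             | inl _, inr _ => true
             | inr _, inl _ => false
             end.

Definition split_index (m : nat) : Type :=
  {ab : nat * nat | (0 < ab.1) && (0 < ab.2) && (ab.1 + ab.2 == m)}.

Definition split_union (Y W : finType) (leY : rel Y) (leW : rel W) (m : nat) : Type :=
  {s : split_index m & (O leY (sval s).1 * O leW (sval s).2)%type}.

(* Pairs (g, h) in O_{Y,c} x O_{W,d} with c + d = m are repackaged as "splits"
   of m: a cut c <= m together with g : Y -> <c> and h : W -> <m - c>.

   The bijection [glue] sends
   - f in O_{mu(Y,W),n} to the split cut just above p = max_Y f, with
     g = f|Y and h = f|W - (p + 1); here g reaches its top value c - 1;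
   - a split (a, g, h) of n - 1 to the split (a + 1, g, h) of n, where g now
     stays below the top value.
   Both cases are told apart by whether g reaches c - 1, so [glue] is
   injective; conversely every split of n arises, by gluing g and c + h back
   into a map on mu(Y,W), or by lowering the cut. *)

From mathcomp Require Import all_boot all_order zify.
Set Implicit Arguments. Unset Strict Implicit. Unset Printing Implicit Defensive.

Section StrictMaps.
Variables (X : finType) (le : rel X).

Lemma strict_presP n (f : {ffun X -> 'I_n}) :
  reflect (forall u v, slt le u v -> f u < f v) (strict_pres le f).
Proof.
apply: (iffP forallP) => [f_mono u v | f_mono u].
  by move/forallP/(_ v)/implyP: (f_mono u).
by apply/forallP => v; apply/implyP/f_mono.
Qed.

Definition ev n (g : O le n) (x : X) : nat := sval g x.

Lemma ev_lt n (g : O le n) x : ev g x < n.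
Proof. exact: ltn_ord. Qed.

Lemma ev_mono n (g : O le n) u v : slt le u v -> ev g u < ev g v.
Proof. by move: u v; apply/strict_presP/(svalP g). Qed.

Lemma ev_inj n (g1 g2 : O le n) : ev g1 =1 ev g2 -> g1 = g2.
Proof. by move=> eq_g; apply/val_inj/ffunP => x; apply/val_inj/eq_g. Qed.

Section Build.
Variables (n : nat) (f : X -> nat).
Hypotheses (f_lt : forall x, f x < n) (f_mono : forall u v, slt le u v -> f u < f v).

Lemma strict_pres_build : strict_pres le [ffun x => Ordinal (f_lt x)].
Proof. by apply/strict_presP => u v /f_mono; rewrite !ffunE. Qed.

Definition build : O le n := exist (fun g => strict_pres le g) _ strict_pres_build.

Lemma ev_build : ev build =1 f.
Proof. by move=> x; rewrite /ev /= ffunE. Qed.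
End Build.

Lemma chain_pos n (x : X) (g : O le n) : 0 < n.
Proof. exact: leq_ltn_trans (ev_lt g x). Qed.

Lemma Omega_card n : Omega le n = #|{: O le n}|.
Proof. by rewrite /Omega card_sig cardsE. Qed.

Lemma Omega0 (x : X) : Omega le 0 = 0.
Proof. by rewrite Omega_card; apply: eq_card0 => g; have := chain_pos x g. Qed.
End StrictMaps.

Section Splits.
Variables (Y W : finType) (leY : rel Y) (leW : rel W).

Definition Splits m : Type := {c : 'I_m.+1 & (O leY c * O leW (m - c))%type}.

Definition cut m (s : Splits m) : nat := tag s.
Definition lowv m (s : Splits m) (y : Y) : nat := ev (tagged s).1 y.
Definition highv m (s : Splits m) (w : W) : nat := ev (tagged s).2 w.

Definition mkSplits m c (c_le : c < m.+1) (g : O leY c) (h : O leW (m - c)) : Splits m :=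
  existT (fun c : 'I_m.+1 => (O leY c * O leW (m - c))%type) (Ordinal c_le) (g, h).

Lemma lowv_lt m (s : Splits m) y : lowv s y < cut s.
Proof. exact: ev_lt. Qed.

Lemma highv_lt m (s : Splits m) w : highv s w < m - cut s.
Proof. exact: ev_lt. Qed.

Lemma lowv_mono m (s : Splits m) u v : slt leY u v -> lowv s u < lowv s v.
Proof. exact: ev_mono. Qed.

Lemma highv_mono m (s : Splits m) u v : slt leW u v -> highv s u < highv s v.
Proof. exact: ev_mono. Qed.

Lemma Splits_eq m (s1 s2 : Splits m) :
  cut s1 = cut s2 -> lowv s1 =1 lowv s2 -> highv s1 =1 highv s2 -> s1 = s2.
Proof.
case: s1 s2 => [c1 [g1 h1]] [c2 [g2 h2]] /val_inj /= eq_c; subst c2.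
by move=> /ev_inj /= -> /ev_inj /= ->.
Qed.

(* The extreme cuts 0 and m contribute nothing since O_{Y,0} and O_{W,0} are empty. *)
Lemma card_Splits m (y0 : Y) (w0 : W) : 0 < m ->
  #|{: Splits m}| = \sum_(1 <= c < m) Omega leY c * Omega leW (m - c).
Proof.
move=> m_pos; rewrite card_tagged sumnE big_map big_enum /=.
transitivity (\sum_(c < m.+1) Omega leY c * Omega leW (m - c)).
  by apply: eq_bigr => c _; rewrite card_prod !Omega_card.
rewrite -(big_mkord xpredT (fun c => Omega leY c * Omega leW (m - c))).
rewrite big_nat_recr //= big_ltn //=.
by rewrite (Omega0 _ y0) subnn (Omega0 _ w0) muln0 add0n addn0.
Qed.

Lemma split_index_spec m (i : split_index m) :
  [/\ 0 < (sval i).1, 0 < (sval i).2 & (sval i).1 + (sval i).2 = m].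
Proof. by case: i => [[c d]] /= /andP[/andP[-> ->] /eqP]. Qed.

Lemma union_eq m (s1 s2 : split_union leY leW m) :
  sval (tag s1) = sval (tag s2) -> ev (tagged s1).1 =1 ev (tagged s2).1 ->
  ev (tagged s1).2 =1 ev (tagged s2).2 -> s1 = s2.
Proof.
case: s1 s2 => [[cd1 i1] [g1 h1]] [[cd2 i2] [g2 h2]] /= eq_cd; subst cd2.
by rewrite (bool_irrelevance i2 i1) => /ev_inj -> /ev_inj ->.
Qed.

Section UnionSplits.
Variables (m : nat) (s : split_union leY leW m).
Let c := (sval (tag s)).1.

Lemma union_cut_lt : c < m.+1.
Proof. by have [_ _ <-] := split_index_spec (tag s); rewrite ltnS leq_addr. Qed.

Lemma union_high_lt w : ev (tagged s).2 w < m - c.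
Proof.
have [_ _ cd_m] := split_index_spec (tag s); have := ev_lt (tagged s).2 w.
rewrite /c; lia.
Qed.

(* A pair indexed by (c, d) is a split with cut c (the W-part is recast to m - c). *)
Definition splits_of_union : Splits m :=
  mkSplits union_cut_lt (tagged s).1 (build union_high_lt (@ev_mono _ _ _ (tagged s).2)).
End UnionSplits.

Section SplitsUnion.
Variables (y0 : Y) (w0 : W) (m : nat) (s : Splits m).

Lemma splits_index_ok : (0 < cut s) && (0 < m - cut s) && (cut s + (m - cut s) == m).
Proof.
rewrite (chain_pos y0 (tagged s).1) (chain_pos w0 (tagged s).2) subnKC ?eqxx //.
exact: (ltn_ord (tag s)).
Qed.

(* Conversely a split with cut c lies over the index pair (c, m - c), both
   parts being positive because Y and W are nonempty. *)
Definition union_of_splits : split_union leY leW m :=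
  existT (fun i : split_index m => (O leY (sval i).1 * O leW (sval i).2)%type)
    (exist _ (cut s, m - cut s) splits_index_ok) ((tagged s).1, (tagged s).2).
End SplitsUnion.

Lemma splits_of_unionK (y0 : Y) (w0 : W) m :
  cancel (@splits_of_union m) (@union_of_splits y0 w0 m).
Proof.
move=> s; apply: union_eq => //= [|w]; last by rewrite ev_build.
have [_ _ cd_m] := split_index_spec (tag s).
have -> : m - (sval (tag s)).1 = (sval (tag s)).2 by lia.
exact/esym/surjective_pairing.
Qed.

Lemma union_of_splitsK (y0 : Y) (w0 : W) m :
  cancel (@union_of_splits y0 w0 m) (@splits_of_union m).
Proof. by move=> s; apply: Splits_eq => // w; rewrite /highv /= ev_build. Qed.

Lemma splits_of_union_bij (y0 : Y) (w0 : W) m : bijective (@splits_of_union m).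
Proof.
by exists (@union_of_splits y0 w0 m); [apply: splits_of_unionK | apply: union_of_splitsK].
Qed.

Lemma union_of_splits_bij (y0 : Y) (w0 : W) m : bijective (@union_of_splits y0 w0 m).
Proof.
by exists (@splits_of_union m); [apply: union_of_splitsK | apply: splits_of_unionK].
Qed.
End Splits.

Section Concatenation.
Variables (Y W : finType) (leY : rel Y) (leW : rel W) (y0 : Y) (w0 : W) (n : nat).
Hypothesis n_pos : 0 < n.
Local Notation M := (mu leY leW).
Local Notation Splits := (Splits leY leW).

Definition peak (f : O M n) : nat := \max_(y : Y) ev f (inl y).

Lemma peak_ge (f : O M n) y : ev f (inl y) <= peak f.
Proof. exact: (@leq_bigmax _ (fun y => ev f (inl y)) y). Qed.

Lemma peak_attained (f : O M n) : exists y, ev f (inl y) = peak f.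
Proof.
have Y_pos : 0 < #|Y| by apply/card_gt0P; exists y0.
by rewrite /peak; have [y ->] := eq_bigmax (fun y => ev f (inl y)) Y_pos; exists y.
Qed.

Lemma peak_lt (f : O M n) w : peak f < ev f (inr w).
Proof. by have [y <-] := peak_attained f; exact: (ev_mono f (u := inl y) (v := inr w)). Qed.

Lemma concat_cut_lt (f : O M n) : (peak f).+1 < n.+1.
Proof. by rewrite ltnS (ltn_trans (peak_lt f w0) (ev_lt _ _)). Qed.

Lemma concat_low_lt (f : O M n) y : ev f (inl y) < (peak f).+1.
Proof. by rewrite ltnS peak_ge. Qed.

Lemma concat_low_mono (f : O M n) u v : slt leY u v -> ev f (inl u) < ev f (inl v).
Proof. exact: (ev_mono f (u := inl u) (v := inl v)). Qed.

Lemma concat_high_lt (f : O M n) w : ev f (inr w) - (peak f).+1 < n - (peak f).+1.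
Proof. by have := peak_lt f w; have := ev_lt f (inr w); lia. Qed.

Lemma concat_high_mono (f : O M n) u v :
  slt leW u v -> ev f (inr u) - (peak f).+1 < ev f (inr v) - (peak f).+1.
Proof.
move=> lt_uv; have := peak_lt f u; have := ev_mono f (u := inr u) (v := inr v) lt_uv; lia.
Qed.

Definition split_concat (f : O M n) : Splits n :=
  mkSplits (concat_cut_lt f) (build (concat_low_lt f) (concat_low_mono f))
    (build (concat_high_lt f) (concat_high_mono f)).

Lemma cut_concat (f : O M n) : cut (split_concat f) = (peak f).+1.
Proof. by []. Qed.

Lemma lowv_concat (f : O M n) y : lowv (split_concat f) y = ev f (inl y).
Proof. exact: ev_build. Qed.

Lemma highv_concat (f : O M n) w :
  highv (split_concat f) w = ev f (inr w) - (peak f).+1.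
Proof. exact: ev_build. Qed.

Lemma extend_cut_lt (s : Splits n.-1) : (cut s).+1 < n.+1.
Proof. by have := ltn_ord (tag s); rewrite ltnS /cut; lia. Qed.

Lemma extend_low_lt (s : Splits n.-1) y : lowv s y < (cut s).+1.
Proof. exact/ltnW/lowv_lt. Qed.

Lemma extend_high_lt (s : Splits n.-1) w : highv s w < n - (cut s).+1.
Proof. by have := highv_lt s w; lia. Qed.

Definition split_extend (s : Splits n.-1) : Splits n :=
  mkSplits (extend_cut_lt s) (build (extend_low_lt s) (@lowv_mono _ _ _ _ _ s))
    (build (extend_high_lt s) (@highv_mono _ _ _ _ _ s)).

Lemma cut_extend (s : Splits n.-1) : cut (split_extend s) = (cut s).+1.
Proof. by []. Qed.

Lemma lowv_extend (s : Splits n.-1) : lowv (split_extend s) =1 lowv s.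
Proof. exact: ev_build. Qed.

Lemma highv_extend (s : Splits n.-1) : highv (split_extend s) =1 highv s.
Proof. exact: ev_build. Qed.

Definition glue (x : O M n + Splits n.-1) : Splits n :=
  match x with inl f => split_concat f | inr s => split_extend s end.

(* The Y-component reaches the top value c - 1 below the cut: this is what
   distinguishes the images of the two halves of [glue]. *)
Definition top_reached m (s : Splits m) : bool := [exists y, lowv s y == (cut s).-1].

Lemma top_concat (f : O M n) : top_reached (split_concat f).
Proof.
by have [y eq_y] := peak_attained f; apply/existsP; exists y; rewrite lowv_concat eq_y.
Qed.

Lemma top_extend (s : Splits n.-1) : ~~ top_reached (split_extend s).
Proof.
by apply/existsP => -[y]; rewrite lowv_extend cut_extend /= ltn_eqF ?lowv_lt.
Qed.

Lemma glue_inj : injective glue.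
Proof.
move=> [f1|s1] [f2|s2] /= eq_glue.
- have eq_cut := congr1 (fun s => cut s) eq_glue; rewrite !cut_concat in eq_cut.
  congr inl; apply: ev_inj => -[y|w].
    by have := congr1 (fun s => lowv s y) eq_glue; rewrite !lowv_concat.
  have := congr1 (fun s => highv s w) eq_glue; rewrite !highv_concat.
  by have := peak_lt f1 w; have := peak_lt f2 w; lia.
- by have := top_concat f1; rewrite eq_glue (negbTE (top_extend s2)).
- by have := top_concat f2; rewrite -eq_glue (negbTE (top_extend s1)).
- congr inr; apply: Splits_eq => [|y|w].
  + by have := congr1 (fun s => cut s) eq_glue; rewrite !cut_extend => -[].
  + by have := congr1 (fun s => lowv s y) eq_glue; rewrite !lowv_extend.
  + by have := congr1 (fun s => highv s w) eq_glue; rewrite !highv_extend.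
Qed.

Lemma cut_pos (s : Splits n) : 0 < cut s.
Proof. exact: chain_pos y0 (tagged s).1. Qed.

Lemma cut_le (s : Splits n) : cut s <= n.
Proof. exact: (ltn_ord (tag s)). Qed.

Definition joined_value (s : Splits n) (x : Y + W) : nat :=
  match x with inl y => lowv s y | inr w => cut s + highv s w end.

Lemma joined_lt (s : Splits n) x : joined_value s x < n.
Proof.
case: x => [y|w] /=; have := cut_le s; first by have := lowv_lt s y; lia.
by have := highv_lt s w; lia.
Qed.

Lemma joined_mono (s : Splits n) u v : slt M u v -> joined_value s u < joined_value s v.
Proof.
case: u v => [u|u] [v|v] //= lt_uv.
- exact: lowv_mono.
- exact: leq_trans (lowv_lt s u) (leq_addr _ _).
- by rewrite ltn_add2l; apply: highv_mono.
Qed.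

Definition join_split (s : Splits n) : O M n := build (joined_lt s) (joined_mono s).

Lemma peak_join (s : Splits n) : top_reached s -> peak (join_split s) = (cut s).-1.
Proof.
case/existsP => y /eqP top_y; apply/eqP; rewrite eqn_leq; apply/andP; split.
  apply/bigmax_leqP => z _; rewrite ev_build /=.
  by have := lowv_lt s z; have := cut_pos s; lia.
by rewrite -top_y; have := peak_ge (join_split s) y; rewrite ev_build.
Qed.

Lemma concat_join (s : Splits n) : top_reached s -> split_concat (join_split s) = s.
Proof.
move=> top; have c_pos := cut_pos s; apply: Splits_eq => [|y|w].
- by rewrite cut_concat peak_join // prednK.
- by rewrite lowv_concat ev_build.
- by rewrite highv_concat peak_join // prednK // ev_build /= addKn.
Qed.

Section Shrink.
Variables (s : Splits n) (not_top : ~~ top_reached s).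

Lemma shrink_cut_lt : (cut s).-1 < n.-1.+1.
Proof. by have := cut_le s; lia. Qed.

Lemma shrink_low_lt y : lowv s y < (cut s).-1.
Proof.
have := lowv_lt s y; move/existsPn/(_ y): not_top.
by have := cut_pos s; lia.
Qed.

Lemma shrink_high_lt w : highv s w < n.-1 - (cut s).-1.
Proof. by have := highv_lt s w; have := cut_pos s; lia. Qed.

Definition shrink_split : Splits n.-1 :=
  mkSplits shrink_cut_lt (build shrink_low_lt (@lowv_mono _ _ _ _ _ s))
    (build shrink_high_lt (@highv_mono _ _ _ _ _ s)).

Lemma extend_shrink : split_extend shrink_split = s.
Proof.
apply: Splits_eq => [|y|w].
- by rewrite cut_extend prednK // cut_pos.
- by rewrite lowv_extend; apply: ev_build.
- by rewrite highv_extend; apply: ev_build.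
Qed.
End Shrink.

Lemma glue_surj (s : Splits n) : exists x, glue x = s.
Proof.
have [top | not_top] := boolP (top_reached s).
  by exists (inl (join_split s)); apply: concat_join.
by exists (inr (shrink_split not_top)); apply: extend_shrink.
Qed.

Lemma glue_bij : bijective glue.
Proof.
apply: inj_card_bij glue_inj _.
rewrite -(card_codom glue_inj); apply/subset_leq_card/subsetP => s _.
by have [x <-] := glue_surj s; apply: codom_f.
Qed.
End Concatenation.

Definition sum_map (A A' B B' : Type) (f : A -> A') (g : B -> B') (x : A + B) : A' + B' :=
  match x with inl a => inl (f a) | inr b => inr (g b) end.

Lemma sum_map_bij (A A' B B' : Type) (f : A -> A') (g : B -> B') :
  bijective f -> bijective g -> bijective (sum_map f g).
Proof.
move=> [f' fK f'K] [g' gK g'K].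
by exists (sum_map f' g') => -[a|b] /=; rewrite ?fK ?gK ?f'K ?g'K.
Qed.

Theorem proposition2p1 (Y W : finType) (leY : rel Y) (leW : rel W) (n : nat) :
  is_poset leY -> is_poset leW -> 0 < #|Y| -> 0 < #|W| -> 2 <= n ->
  (exists f : (O (mu leY leW) n + split_union leY leW n.-1)%type ->
              split_union leY leW n, bijective f)
  /\
  Omega (mu leY leW) n
    + \sum_(1 <= a < n.-1) Omega leY a * Omega leW (n.-1 - a)
  = \sum_(1 <= c < n) Omega leY c * Omega leW (n - c).
Proof.
move=> _ _ /card_gt0P[y0 _] /card_gt0P[w0 _] n_ge2.
have n_pos : 0 < n by apply: ltnW.
have glueB := glue_bij leY leW y0 w0 n_pos.
split.
  exists (@union_of_splits _ _ leY leW y0 w0 n \o glue y0 w0 n_pos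
          \o sum_map id (@splits_of_union _ _ leY leW n.-1)).
  apply: bij_comp; first exact: bij_comp (union_of_splits_bij leY leW y0 w0 n) glueB.
  by apply: sum_map_bij; [exists id | exact: (splits_of_union_bij leY leW y0 w0)].
have n1_pos : 0 < n.-1 by rewrite -ltnS prednK.
rewrite -(card_Splits leY leW y0 w0 n1_pos) -(card_Splits leY leW y0 w0 n_pos).
by rewrite Omega_card -card_sum; apply: bij_eq_card glueB.
Qed.
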